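(* Let $(P_n(x))_{n \ge 0}$ be a splitting sequence of a nice polynomial $P_0(x)$, with binary string $s_0 s_1 \ldots$, and suppose $s_{i-1} s_i s_{i+1} = LLS$ for some $i \in \mathbb{N}$. If $P_i(x)$ and $P_{i+2}(x)$ are both $k$-good for some $k \in \mathbb{N}$, then $P_i(x)$ is $(k+1)$-good.
   Context: $P \equiv Q \pmod{M}$ for $P,Q,M \in \mathbb{Z}[x]$ means $M$ divides $P-Q$ in $\mathbb{Z}[x]$. For $n \in \mathbb{N}_0$, $P \in \mathbb{Z}[x]$ is $n$-good if $P(x^{2^m}) \equiv P(x)^{2^m} \pmod{2^{m+1}}$ for every $m \in \{0,\dots,n\}$. A polynomial is nice if it is irreducible in $\mathbb{Z}[x]$ with leading and constant coefficients in $\{\pm 1\}$. Splitting sequence of an irreducible $P \in \mathbb{Z}[x]$: $(P_n)_{n \ge 0}$ with $P_0 = P$ such that for each $n$: if $P_n$ is irreducible, $P_{n+1}(x) = P_n(x^2)$; if $P_n$ is reducible, then (as $P_{n-1}$ is irreducible and $P_n(x) = P_{n-1}(x^2)$ factors as a product of exactly two irreducibles in $\mathbb{Z}[x]$) $P_{n+1}$ is one of these two factors. Its binary string has $s_n = L$ if $P_n$ is irreducible and $s_n = S$ otherwise. *)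

From HB Require Import structures.
From mathcomp Require Import all_boot all_order all_algebra.
Set Implicit Arguments. Unset Strict Implicit. Unset Printing Implicit Defensive.
Import Order.TTheory GRing.Theory Num.Theory.
Local Open Scope ring_scope.

Definition polycongr (P Q M : {poly int}) : Prop :=
  exists R : {poly int}, P - Q = M * R.

Definition good (n : nat) (P : {poly int}) : Prop :=
  forall m : nat, (m <= n)%N ->
    polycongr (P \Po 'X^(2 ^ m)) (P ^+ (2 ^ m)) ((2 ^ m.+1)%:R)%:P.

Definition irreducibleZx (P : {poly int}) : Prop :=
  P != 0 /\ P \isn't a GRing.unit /\
  forall A B : {poly int}, P = A * B -> A \is a GRing.unit \/ B \is a GRing.unit.

Definition nice (P : {poly int}) : Prop :=
  irreducibleZx P /\ (lead_coef P = 1 \/ lead_coef P = -1)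
  /\ (P`_0 = 1 \/ P`_0 = -1).

Definition splitting_sequence (P : {poly int}) (Ps : nat -> {poly int}) : Prop :=
  Ps 0%N = P /\
  forall n : nat,
    (irreducibleZx (Ps n) -> Ps n.+1 = Ps n \Po 'X^2) /\
    (~ irreducibleZx (Ps n) ->
       exists A B : {poly int}, irreducibleZx A /\ irreducibleZx B /\
         Ps n = A * B /\ (Ps n.+1 = A \/ Ps n.+1 = B)).

Inductive letter := L | S.
Definition s_of (Ps : nat -> {poly int}) (n : nat) (c : letter) : Prop :=
  match c with L => irreducibleZx (Ps n) | S => ~ irreducibleZx (Ps n) end.

(* Write Q = P_i, so Q = P_(i-1)(x^2), and Q(x^2) = A B with A = P_(i+2).
   Since A is prime in Q[x] it divides A(-x) or B(-x); in the first case A and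
   B are both even and Q would split, so B = A(-x) and Q is the Graeffe
   transform e^2 - x o^2 of A = e(x^2) + x o(x^2).  For k >= 1, k-goodness of
   P gives 2^(k+1) | P(x^2) - P^2, and (k+1)-goodness of a k-good P follows
   from 2^(k+2) | P(x^2) - P^2.  Splitting 2^(k+1) | A(x^2) - A^2 into even and
   odd parts, and using that Q is even, yields 2^(k+1) | o and
   2^(k+1) | e(x^2) - e^2; expanding Q(x^2) - Q^2 in e and o then gives the
   extra factor of 2. *)

From mathcomp Require Import all_boot all_order all_algebra.
From mathcomp Require Import ring zify.
From Stdlib Require Import Classical.
Set Implicit Arguments. Unset Strict Implicit. Unset Printing Implicit Defensive.
Import Order.TTheory GRing.Theory Num.Theory.
Local Open Scope ring_scope.

Section EvenOddParts.
Variable R : comNzRingType.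
Implicit Types p q : {poly R}.

Lemma even_poly_compX2 p : even_poly (p \Po 'X^2) = p.
Proof.
apply/polyP => i; rewrite coef_even_poly coef_comp_poly_Xn //.
by rewrite -muln2 dvdn_mull // mulnK.
Qed.

Lemma odd_poly_compX2 p : odd_poly (p \Po 'X^2) = 0.
Proof.
apply/polyP => i; rewrite coef_odd_poly coef_comp_poly_Xn // coef0.
by rewrite dvdn2 /= odd_double.
Qed.

Lemma compX2_inj : injective (fun p : {poly R} => p \Po 'X^2).
Proof.
by move=> p q /= epq; rewrite -(even_poly_compX2 p) epq even_poly_compX2.
Qed.

Lemma even_poly_compX2_addMX p q :
  even_poly (p \Po 'X^2 + (q \Po 'X^2) * 'X) = p.
Proof.
by rewrite even_polyD even_polyMX odd_poly_compX2 mul0r addr0 even_poly_compX2.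
Qed.

Lemma odd_poly_compX2_addMX p q :
  odd_poly (p \Po 'X^2 + (q \Po 'X^2) * 'X) = q.
Proof.
by rewrite odd_polyD odd_polyMX odd_poly_compX2 even_poly_compX2 add0r.
Qed.

Lemma coef0_comp p q : (p \Po q)`_0 = p.[q`_0].
Proof. by rewrite -horner_coef0 horner_comp horner_coef0. Qed.

Lemma comp_polyXN p :
  p \Po - 'X = even_poly p \Po 'X^2 - (odd_poly p \Po 'X^2) * 'X.
Proof.
have compX2N (r : {poly R}) : (r \Po 'X^2) \Po - 'X = r \Po 'X^2.
  by rewrite -comp_polyA comp_Xn_poly sqrrN.
rewrite -{1}[p]poly_even_odd comp_polyD comp_polyM !compX2N comp_polyX.
by rewrite mulrN.
Qed.

Lemma odd_poly_comp_polyXN p : odd_poly (p \Po - 'X) = - odd_poly p.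
Proof.
by rewrite comp_polyXN raddfB /= odd_polyMX odd_poly_compX2 even_poly_compX2 sub0r.
Qed.

Lemma comp_polyXNK p : (p \Po - 'X) \Po - 'X = p.
Proof. by rewrite -comp_polyA raddfN /= comp_polyX opprK comp_polyXr. Qed.

Lemma coef0_comp_polyXN p : (p \Po - 'X)`_0 = p`_0.
Proof. by rewrite coef0_comp coefN coefX oppr0 horner_coef0. Qed.

Lemma sqr_even_odd p : p ^+ 2 =
  (even_poly p ^+ 2 + 'X * odd_poly p ^+ 2) \Po 'X^2
  + ((2 * (even_poly p * odd_poly p)) \Po 'X^2) * 'X.
Proof.
have := poly_even_odd p; move: (even_poly p) (odd_poly p) => e o <-.
have two : (2 : {poly R}) \Po 'X^2 = 2 by rewrite -polyC_natr comp_polyC.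
by rewrite !expr2 comp_polyD !comp_polyM comp_polyX two; ring.
Qed.

Definition graeffe p := even_poly p ^+ 2 - 'X * odd_poly p ^+ 2.

Lemma graeffe_compX2 p : graeffe p \Po 'X^2 = p * (p \Po - 'X).
Proof.
rewrite comp_polyXN /graeffe.
have := poly_even_odd p; move: (even_poly p) (odd_poly p) => e o <-.
by rewrite !expr2 comp_polyB !comp_polyM comp_polyX; ring.
Qed.

End EvenOddParts.

Lemma size_comp_polyXN (R : idomainType) (p : {poly R}) :
  size (p \Po - 'X) = size p.
Proof. by rewrite size_comp_poly2 // size_polyN size_polyX. Qed.

Lemma comp_polyXN_id_even (p : {poly int}) :
  p \Po - 'X = p -> p = even_poly p \Po 'X^2.
Proof.
move=> pN; have oN : odd_poly p = - odd_poly p.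
  by rewrite -{1}pN odd_poly_comp_polyXN.
have o0 : odd_poly p = 0.
  by apply/polyP => i; apply/eqP; rewrite coef0 -eqNr -coefN -oN.
by rewrite -[LHS]poly_even_odd o0 comp_poly0 mul0r addr0.
Qed.

Definition pow2_dvdp (j : nat) (p : {poly int}) := exists r, p = 2 ^+ j * r.

Section Pow2Divisibility.
Implicit Types (i j : nat) (p q : {poly int}).

Lemma polyC_pow2 j : ((2 : int) ^+ j)%:P = 2 ^+ j.
Proof. by rewrite rmorphXn /= polyC_natr. Qed.

Lemma pow2_dvdpP j p : pow2_dvdp j p <-> forall i, (2 ^+ j %| p`_i)%Z.
Proof.
split=> [[r ->] i|dvd_coef]; first by rewrite -polyC_pow2 coefCM dvdz_mulr.
exists (\poly_(i < size p) (p`_i %/ 2 ^+ j)%Z).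
apply/polyP=> i; rewrite -polyC_pow2 coefCM coef_poly.
case: ltnP => [_|le_p_i]; first by rewrite mulrC divzK.
by rewrite mulr0 nth_default.
Qed.

Lemma pow2_dvdpD j p q :
  pow2_dvdp j p -> pow2_dvdp j q -> pow2_dvdp j (p + q).
Proof. by move=> [r ->] [s ->]; exists (r + s); rewrite mulrDr. Qed.

Lemma pow2_dvdpN j p : pow2_dvdp j p -> pow2_dvdp j (- p).
Proof. by move=> [r ->]; exists (- r); rewrite mulrN. Qed.

Lemma pow2_dvdpB j p q :
  pow2_dvdp j p -> pow2_dvdp j q -> pow2_dvdp j (p - q).
Proof. by move=> dp dq; apply/pow2_dvdpD/pow2_dvdpN. Qed.

Lemma pow2_dvdpMl j p q : pow2_dvdp j p -> pow2_dvdp j (q * p).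
Proof. by move=> [r ->]; exists (q * r); rewrite mulrCA. Qed.

Lemma pow2_dvdpMr j p q : pow2_dvdp j p -> pow2_dvdp j (p * q).
Proof. by rewrite mulrC; apply: pow2_dvdpMl. Qed.

Lemma pow2_dvdpM i j p q :
  pow2_dvdp i p -> pow2_dvdp j q -> pow2_dvdp (i + j) (p * q).
Proof. by move=> [r ->] [s ->]; exists (r * s); rewrite exprD; ring. Qed.

Lemma pow2_dvdp_leq i j p : (i <= j)%N -> pow2_dvdp j p -> pow2_dvdp i p.
Proof.
by move=> /subnKC <- [r ->]; exists (2 ^+ (j - i) * r); rewrite exprD mulrA.
Qed.

Lemma pow2_dvdp_mul2 j p : pow2_dvdp j p -> pow2_dvdp j.+1 (2 * p).
Proof. by move=> [r ->]; exists r; rewrite exprS mulrA. Qed.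

Lemma pow2_dvdp_mul2K j p : pow2_dvdp j.+1 (2 * p) -> pow2_dvdp j p.
Proof.
move=> [r]; rewrite exprS -mulrA => /mulfI p_eq; exists r; apply: p_eq.
by rewrite -polyC_natr polyC_eq0.
Qed.

Lemma pow2_dvdp_even j p : pow2_dvdp j p -> pow2_dvdp j (even_poly p).
Proof.
by move=> /pow2_dvdpP dp; apply/pow2_dvdpP => i; rewrite coef_even_poly.
Qed.

Lemma pow2_dvdp_odd j p : pow2_dvdp j p -> pow2_dvdp j (odd_poly p).
Proof.
by move=> /pow2_dvdpP dp; apply/pow2_dvdpP => i; rewrite coef_odd_poly.
Qed.

Lemma pow2_dvdp_comp j p q : pow2_dvdp j p -> pow2_dvdp j (p \Po q).
Proof.
by move=> [r ->]; exists (r \Po q); rewrite comp_polyM -polyC_pow2 comp_polyC.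
Qed.

Lemma pow2_dvdp_compXn j n p :
  (0 < n)%N -> pow2_dvdp j (p \Po 'X^n) -> pow2_dvdp j p.
Proof.
move=> n_gt0 /pow2_dvdpP dp; apply/pow2_dvdpP => i; have := dp (i * n)%N.
by rewrite coef_comp_poly_Xn // dvdn_mull // mulnK.
Qed.

Lemma pow2_dvdp_subX2 j p q :
  pow2_dvdp j.+1 (p - q) -> pow2_dvdp j.+2 (p ^+ 2 - q ^+ 2).
Proof.
move=> [r pq]; have -> : p = q + 2 ^+ j.+1 * r by rewrite -pq; ring.
by exists (q * r + 2 ^+ j * r ^+ 2); rewrite !exprS; ring.
Qed.

Lemma pow2_dvdp_mulKl j p q :
  p`_0 = 1 -> pow2_dvdp j (p * q) -> pow2_dvdp j q.
Proof.
move=> p0 /pow2_dvdpP dpq; apply/pow2_dvdpP => i.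
elim: i {-2}i (leqnn i) => [|n IHn] i le_i_n.
  by move: (dpq 0%N); rewrite coef0M p0 mul1r; case: i le_i_n.
have := dpq i; rewrite coefM big_ord_recl /= subn0 p0 mul1r.
rewrite rpredDr //; apply: rpred_sum => l _; apply/dvdz_mull/IHn.
rewrite /bump /=; lia.
Qed.

End Pow2Divisibility.

Lemma polycongr_pow2 m P Q :
  polycongr P Q ((2 ^ m)%:R)%:P <-> pow2_dvdp m (P - Q).
Proof. by rewrite /polycongr /pow2_dvdp natrX polyC_pow2. Qed.

Lemma comp_Xpow2S_sub m (P : {poly int}) :
  P \Po 'X^(2 ^ m.+1) - P ^+ (2 ^ m.+1) =
  (P \Po 'X^2 - P ^+ 2) \Po 'X^(2 ^ m)
  + ((P \Po 'X^(2 ^ m)) ^+ 2 - (P ^+ (2 ^ m)) ^+ 2).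
Proof.
rewrite rmorphB rmorphXn /= -comp_polyA comp_Xn_poly -!exprM expnSr.
by rewrite addrA subrK.
Qed.

Lemma good_pow2_dvdp_subX2 k P :
  good k.+1 P -> pow2_dvdp k.+2 (P \Po 'X^2 - P ^+ 2).
Proof.
move=> gP; apply: (@pow2_dvdp_compXn _ (2 ^ k)); first by rewrite expn_gt0.
have /polycongr_pow2 top := gP k.+1 (leqnn _).
have /polycongr_pow2 /pow2_dvdp_subX2 sqr := gP k (leqnSn _).
by move: top; rewrite comp_Xpow2S_sub => /pow2_dvdpB /(_ sqr); rewrite addrK.
Qed.

Lemma good_succ k P :
  good k P -> pow2_dvdp k.+2 (P \Po 'X^2 - P ^+ 2) -> good k.+1 P.
Proof.
move=> gP dP m; rewrite leq_eqVlt => /orP[/eqP ->|]; last exact: gP.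
have /polycongr_pow2 /pow2_dvdp_subX2 sqr := gP k (leqnn _).
apply/polycongr_pow2; rewrite comp_Xpow2S_sub.
exact/pow2_dvdpD/sqr/pow2_dvdp_comp.
Qed.

Lemma pow2_dvdp_subX2_coef0 P :
  pow2_dvdp 2 (P \Po 'X^2 - P ^+ 2) -> P`_0 \is a GRing.unit -> P`_0 = 1.
Proof.
move=> /pow2_dvdpP /(_ 0%N); rewrite coefB coef_comp_poly_Xn // dvdn0 div0n.
rewrite expr2 coef0M => dvd4 /orP[] /eqP P0 //.
by rewrite P0 in dvd4.
Qed.

Section GraeffeSquareSub.
Variables (k : nat) (A : {poly int}).
Hypotheses (A0 : A`_0 = 1) (graeffe_even : odd_poly (graeffe A) = 0).
Hypothesis dA : pow2_dvdp k.+1 (A \Po 'X^2 - A ^+ 2).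

Let e := even_poly A.
Let o := odd_poly A.
Let D := A - (e ^+ 2 + 'X * o ^+ 2).

Let sqr_sub_even_odd :
  A \Po 'X^2 - A ^+ 2 = D \Po 'X^2 + ((- (2 * (e * o))) \Po 'X^2) * 'X.
Proof. by rewrite [A ^+ 2]sqr_even_odd /D comp_polyB raddfN /=; ring. Qed.

Let dD : pow2_dvdp k.+1 D.
Proof.
by have := pow2_dvdp_even dA; rewrite sqr_sub_even_odd even_poly_compX2_addMX.
Qed.

Lemma pow2_dvdp_odd_graeffe : pow2_dvdp k.+1 o.
Proof.
(* The odd part of A(x^2) - A^2 is -2eo; the odd part of its even part D is
   o - 2 even(o^2) because graeffe A is even. *)
have dvd_o_k : pow2_dvdp k o.
  have := pow2_dvdp_odd dA; rewrite sqr_sub_even_odd odd_poly_compX2_addMX.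
  move=> /pow2_dvdpN; rewrite opprK => /pow2_dvdp_mul2K.
  by apply: pow2_dvdp_mulKl; rewrite coef_even_poly.
have odd_e2 : odd_poly (e ^+ 2) = even_poly (o ^+ 2).
  by apply/eqP; rewrite -subr_eq0 -graeffe_even raddfB /= mulrC odd_polyMX.
have -> : o = odd_poly D + 2 * even_poly (o ^+ 2).
  rewrite /D !raddfB raddfD /= mulrC odd_polyMX odd_e2.
  by rewrite -polyC_natr mul_polyC scaler_nat mulr2n; ring.
apply: pow2_dvdpD; first exact: pow2_dvdp_odd dD.
apply: (@pow2_dvdp_leq _ (k + k).+1); first lia.
by apply/pow2_dvdp_mul2/pow2_dvdp_even; rewrite expr2; apply: pow2_dvdpM.
Qed.

Lemma pow2_dvdp_even_graeffe : pow2_dvdp k.+1 (e \Po 'X^2 - e ^+ 2).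
Proof.
have -> : e \Po 'X^2 - e ^+ 2 = D - (o \Po 'X^2) * 'X + 'X * o ^+ 2.
  by rewrite /D -{1}[A]poly_even_odd; ring.
have dvd_o := pow2_dvdp_odd_graeffe.
apply: pow2_dvdpD; last by rewrite expr2; exact/pow2_dvdpMl/pow2_dvdpMl.
exact/(pow2_dvdpB dD)/pow2_dvdpMr/pow2_dvdp_comp.
Qed.

Lemma pow2_dvdp_graeffe_subX2 :
  pow2_dvdp k.+2 (graeffe A \Po 'X^2 - graeffe A ^+ 2).
Proof.
have -> : graeffe A \Po 'X^2 - graeffe A ^+ 2 =
    ((e \Po 'X^2) ^+ 2 - (e ^+ 2) ^+ 2) - 'X ^+ 2 * (o \Po 'X^2) ^+ 2
    + (2 * 'X * e ^+ 2 - 'X ^+ 2 * o ^+ 2) * o ^+ 2.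
  by rewrite /graeffe -/e -/o !expr2 comp_polyB !comp_polyM comp_polyX; ring.
have dvd_sqr q : pow2_dvdp k.+1 q -> pow2_dvdp k.+2 (q ^+ 2).
  move=> dq; apply: (@pow2_dvdp_leq _ (k.+1 + k.+1)); first lia.
  by rewrite expr2; apply: pow2_dvdpM.
have dvd_o := pow2_dvdp_odd_graeffe.
apply: pow2_dvdpD; last exact/pow2_dvdpMl/dvd_sqr.
apply: pow2_dvdpB; first exact/pow2_dvdp_subX2/pow2_dvdp_even_graeffe.
exact/pow2_dvdpMl/dvd_sqr/pow2_dvdp_comp.
Qed.

End GraeffeSquareSub.

Lemma comp_poly_unit (R : idomainType) (p q : {poly R}) :
  p \is a GRing.unit -> p \Po q \is a GRing.unit.
Proof.
move=> p_unit; have /size_poly1P[c _ pc] : size p == 1.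
  by move: p_unit; rewrite poly_unitE => /andP[].
by rewrite pc comp_polyC -pc.
Qed.

Lemma eqp_coef0 (R : idomainType) (p q : {poly R}) :
  p %= q -> p`_0 = q`_0 -> p`_0 != 0 -> p = q.
Proof.
move=> /eqpP[[a b] /= /andP[a0 _] pq] pq0 p0_neq0.
have ab : a = b.
  apply: (mulIf p0_neq0); have := congr1 (fun r : {poly R} => r`_0) pq.
  by rewrite /= !coefZ pq0.
by apply: (@mulfI _ a%:P); rewrite ?polyC_eq0 // !mul_polyC pq ab.
Qed.

Lemma irredp_dvdpM (F : fieldType) (p q r : {poly F}) :
  irreducible_poly p -> p %| q * r -> (p %| q) || (p %| r).
Proof.
move=> irr_p dvd_pqr; have [coprime_pq|] := boolP (coprimep p q).
  by rewrite (Gauss_dvdpr _ coprime_pq) in dvd_pqr; rewrite dvd_pqr orbT.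
rewrite coprimep_def => gcd_size.
have /eqp_dvdl <- : gcdp p q %= p by apply: irr_p => //; apply: dvdp_gcdl.
by rewrite dvdp_gcdr.
Qed.

Lemma irredp_int_dvdpM (p q r : {poly int}) :
  irreducible_poly p -> p %| q * r -> (p %| q) || (p %| r).
Proof.
rewrite -irreducible_rat_int -!dvdp_rat_int rmorphM /= => irr_p.
by move/(irredp_dvdpM irr_p); rewrite !dvdp_rat_int.
Qed.

Lemma irreducibleZx_size (A : {poly int}) :
  irreducibleZx A -> A`_0 \is a GRing.unit -> (1 < size A)%N.
Proof.
move=> [A_neq0 [A_nunit _]] A0_unit.
rewrite ltnNge; apply: contra A_nunit => sA.
by rewrite poly_unitE A0_unit andbT eqn_leq sA size_poly_gt0.
Qed.

Lemma irreducibleZx_poly (A : {poly int}) :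
  irreducibleZx A -> (1 < size A)%N -> irreducible_poly A.
Proof.
move=> [A_neq0 [_ irrA]] sA; split=> // q q_size dvd_qA.
have [r Ar] := dvdpP_int dvd_qA.
case: (irrA _ _ Ar) => [|r_unit].
  by rewrite poly_unitE size_zprimitive (negPf q_size).
have q_neq0 : q != 0.
  by apply: contraNneq A_neq0 => q0; rewrite Ar q0 zprimitive0 mul0r.
move: r_unit; rewrite poly_unitE => /andP[/size_poly1P[c c_neq0 rc] _].
apply: (eqp_trans (y := zprimitive q)).
  by rewrite {1}[q]zpolyEprim eqp_scale // zcontents_eq0.
by rewrite Ar rc mulrC mul_polyC eqp_sym eqp_scale.
Qed.

Lemma compX2_factor_conj (Q A B : {poly int}) :
  irreducibleZx Q -> irreducibleZx A -> irreducibleZx B ->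
  Q \Po 'X^2 = A * B -> A`_0 = 1 -> B`_0 = 1 -> B = A \Po - 'X.
Proof.
move=> iQ iA iB QAB A0 B0.
have sA : (1 < size A)%N by apply: irreducibleZx_size; rewrite ?A0 ?unitr1.
have sB : (1 < size B)%N by apply: irreducibleZx_size; rewrite ?B0 ?unitr1.
have [irrA irrB] := (irreducibleZx_poly iA sA, irreducibleZx_poly iB sB).
have ABN : (A \Po - 'X) * (B \Po - 'X) = A * B.
  by rewrite -comp_polyM -QAB -comp_polyA comp_Xn_poly sqrrN.
have : A %| (A \Po - 'X) * (B \Po - 'X) by rewrite ABN dvdp_mulIl.
case/(irredp_int_dvdpM irrA)/orP => [dvd_AAN|dvd_ABN].
- exfalso; have AN : A \Po - 'X = A.
    apply: esym; apply: eqp_coef0; rewrite ?coef0_comp_polyXN ?A0 ?oner_eq0 //.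
    by rewrite -dvdp_size_eqp // size_comp_polyXN.
  have BN : B \Po - 'X = B.
    by apply: (mulfI (irredp_neq0 irrA)); rewrite -{1}AN ABN.
  have QE : Q = even_poly A * even_poly B.
    by apply: compX2_inj; rewrite /= QAB comp_polyM -!comp_polyXN_id_even.
  move: iQ iA iB => [_ [_ irrQ]] [_ [A_nunit _]] [_ [B_nunit _]].
  case: (irrQ _ _ QE) => [Ae_unit|Be_unit].
    by case/negP: A_nunit; rewrite (comp_polyXN_id_even AN) comp_poly_unit.
  by case/negP: B_nunit; rewrite (comp_polyXN_id_even BN) comp_poly_unit.
- have : A \Po - 'X %| B by rewrite -[B]comp_polyXNK dvdp_comp_poly.
  move/(irrB _ _); rewrite size_comp_polyXN neq_ltn sA orbT => /(_ isT) AN_B.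
  by apply: eqp_coef0; rewrite // ?coef0_comp_polyXN ?A0 ?B0 ?oner_eq0 // eqp_sym.
Qed.

Lemma coef0_compX2 (p : {poly int}) : (p \Po 'X^2)`_0 = p`_0.
Proof. by rewrite coef0_comp coefXn /= horner_coef0. Qed.

Lemma splitting_sequence_coef0_unit P0 Ps :
  nice P0 -> splitting_sequence P0 Ps -> forall n, (Ps n)`_0 \is a GRing.unit.
Proof.
move=> [_ [_ P00]] [Ps0 PsS]; elim=> [|n IHn].
  by rewrite Ps0; case: P00 => ->; rewrite ?unitr1 ?unitrN1.
have [irr_n|red_n] := classic (irreducibleZx (Ps n)).
  by rewrite ((PsS n).1 irr_n) coef0_compX2.
have [A [B [_ [_ [PsAB [->| ->]]]]]] := (PsS n).2 red_n;
  by move: IHn; rewrite PsAB coef0M unitrM => /andP[].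
Qed.

Lemma good_succ_of_compX2_factor k (R Q A B : {poly int}) :
  Q = R \Po 'X^2 -> Q \Po 'X^2 = A * B ->
  irreducibleZx Q -> irreducibleZx A -> irreducibleZx B ->
  Q`_0 \is a GRing.unit -> A`_0 \is a GRing.unit ->
  good k.+1 Q -> good k.+1 A -> good k.+2 Q.
Proof.
move=> QR QAB iQ iA iB Q0_unit A0_unit gQ gA.
have [dQ dA] := (good_pow2_dvdp_subX2 gQ, good_pow2_dvdp_subX2 gA).
have Q0 : Q`_0 = 1.
  by apply: pow2_dvdp_subX2_coef0 Q0_unit; exact: pow2_dvdp_leq dQ.
have A0 : A`_0 = 1.
  by apply: pow2_dvdp_subX2_coef0 A0_unit; exact: pow2_dvdp_leq dA.
have B0 : B`_0 = 1.
  have := congr1 (fun p : {poly int} => p`_0) QAB.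
  by rewrite /= coef0_compX2 coef0M Q0 A0 mul1r.
have QA : Q = graeffe A.
  apply: compX2_inj.
  by rewrite /= graeffe_compX2 QAB (compX2_factor_conj iQ iA iB).
apply: good_succ gQ _; rewrite QA; apply: pow2_dvdp_graeffe_subX2 => //.
by rewrite -QA QR odd_poly_compX2.
Qed.

Theorem lemma3p16 (P0 : {poly int}) (Ps : nat -> {poly int}) (i k : nat) :
  nice P0 -> splitting_sequence P0 Ps ->
  (1 <= i)%N -> (1 <= k)%N ->
  s_of Ps i.-1 L -> s_of Ps i L -> s_of Ps i.+1 S ->
  good k (Ps i) -> good k (Ps i.+2) ->
  good k.+1 (Ps i).
Proof.
case: i k => [|i] [|k] // nP0 sPs _ _ /= irr_R irr_Q red_Q2 gQ gA.
have Ps_unit := splitting_sequence_coef0_unit nP0 sPs.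
have [_ PsS] := sPs.
have QR := (PsS i).1 irr_R.
have Q2 := (PsS i.+1).1 irr_Q.
have [A [B [iA [iB [Q2AB A_or_B]]]]] := (PsS i.+2).2 red_Q2.
rewrite Q2 in Q2AB; case: A_or_B => [A_next|B_next].
  apply: (good_succ_of_compX2_factor QR Q2AB irr_Q iA iB (Ps_unit _) _ gQ);
  by rewrite -A_next ?Ps_unit.
have Q2BA : Ps i.+1 \Po 'X^2 = B * A by rewrite mulrC.
apply: (good_succ_of_compX2_factor QR Q2BA irr_Q iB iA (Ps_unit _) _ gQ);
by rewrite -B_next ?Ps_unit.
Qed.
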